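(* Let $\mathcal G$ be a grid and $\delta<c(\mathcal G)/2$. Let $A_+=\mathbb{R}^n\setminus\{\vec a:\mathsf M^{\mathcal G_+}_\delta(\vec a)\neq\vec a\}$ and $A_-=\mathbb{R}^n\setminus(\{\vec a:\mathsf M^{\mathcal G_-}_\delta(\vec a)\neq\vec a\}\cup\mathrm{Grid}_{\mathcal G})$, viewed as subposets with inclusions $\iota_\pm:A_\pm\hookrightarrow\mathbb{R}^n$. Then for every finitely presented $n$-parameter persistence module $M$, $$\mathsf M^{\mathcal G_+}_\delta(M)\cong\mathrm{Lan}_{\iota_+}(M\circ\iota_+),\qquad \mathsf M^{\mathcal G_-}_\delta(M)\cong\mathrm{Ran}_{\iota_-}(M\circ\iota_-),$$ the left Kan extension along $\iota_+$ and the right Kan extension along $\iota_-$ respectively.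
   Context: Modules are functors $(\mathbb{R}^n,\leq)\to$ finite-dimensional vector spaces, equivalently $\mathbb{R}^n$-graded modules over the monoid ring $P_n$ of $([0,\infty)^n,+)$; finitely presented means cokernel of a map of finitely generated free graded modules. A grid is $\mathcal G=\prod_i\mathcal G^i$, $\mathcal G^i:[k_i]\to\mathbb{R}$, with controlling constant $c(\mathcal G)=\min\{\|\vec a-\vec b\|_\infty:\vec a\neq\vec b\in\mathrm{Im}\,\mathcal G\}$, and $\mathrm{Grid}_{\mathcal G}=\{\vec a\in\mathbb{R}^n:a_j\in\mathrm{Im}\,\mathcal G^j\text{ for some }j\}$. One-sided merge functions act coordinatewise: $\mathsf M^{\mathcal G_+}_\delta$ sends $x\in[\mathcal G^i(k)-\delta,\mathcal G^i(k)]$ to $\mathcal G^i(k)$ and fixes other $x$; $\mathsf M^{\mathcal G_-}_\delta$ sends $x\in[\mathcal G^i(k),\mathcal G^i(k)+\delta]$ to $\mathcal G^i(k)$ and fixes other $x$. Both are order preserving. For $\mathsf F\in\{\mathsf M^{\mathcal G_+}_\delta,\mathsf M^{\mathcal G_-}_\delta\}$ and a presentation $F_1\xrightarrow{p_1}F_0\to M$, $\mathsf F(M)$ is the cokernel of the map obtained by replacing each generator grade $\vec g$ by $\mathsf F(\vec g)$ and each monomial $\vec x^{\vec r-\vec b}$ in $p_1$ by $\vec x^{\mathsf F(\vec r)-\mathsf F(\vec b)}$. *)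

From HB Require Import structures.
From mathcomp Require Import all_boot all_order all_algebra.
From mathcomp Require Import reals.
Set Implicit Arguments. Unset Strict Implicit. Unset Printing Implicit Defensive.
Import Order.TTheory GRing.Theory Num.Theory.
Local Open Scope ring_scope.

Section Functors0.
Variable K : fieldType.

Definition lin (U V : lmodType K) (f : U -> V) : Prop :=
  forall (c : K) (u v : U), f (c *: u + v) = c *: f u + f v.

Record pfunctor (T : Type) (le : T -> T -> Prop) := PFunctor {
  fsp : T -> lmodType K;
  fmap : forall s t, le s t -> fsp s -> fsp t;
  fmap_lin : forall s t (h : le s t), lin (fmap h);
  fmap_id : forall s (h : le s s) v, fmap h v = v;
  fmap_comp : forall s t u (h1 : le s t) (h2 : le t u) (h3 : le s u) v,
      fmap h3 v = fmap h2 (fmap h1 v) }.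
End Functors0.
Arguments fmap {K T le} p {s t} _ _.
Arguments fsp {K T le} p _.
Section Functors.
Variable K : fieldType.

Definition restrict (S T : Type) (leS : S -> S -> Prop) (leT : T -> T -> Prop)
  (f : S -> T) (mono : forall s s', leS s s' -> leT (f s) (f s'))
  (F : pfunctor K leT) : pfunctor K leS.
Proof.
refine (@PFunctor K S leS (fun s => fsp F (f s))
          (fun s s' h => fmap F (mono s s' h)) _ _ _).
- by move=> s t h; apply: fmap_lin.
- by move=> s h v; apply: fmap_id.
- by move=> s t u h1 h2 h3 v; apply: fmap_comp.
Defined.

Definition natural (T : Type) (le : T -> T -> Prop) (F G : pfunctor K le)
  (a : forall t, fsp F t -> fsp G t) : Prop :=
  (forall t, lin (a t)) /\
  (forall s t (h : le s t) v, a t (fmap F h v) = fmap G h (a s v)).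

Definition fiso (T : Type) (le : T -> T -> Prop) (F G : pfunctor K le) : Prop :=
  exists a : forall t, fsp F t -> fsp G t, natural a /\ forall t, bijective (a t).

Definition isLan (S T : Type) (leS : S -> S -> Prop) (leT : T -> T -> Prop)
  (f : S -> T) (mono : forall s s', leS s s' -> leT (f s) (f s'))
  (F : pfunctor K leS) (L : pfunctor K leT) : Prop :=
  exists eta : forall s, fsp F s -> fsp (restrict mono L) s,
    natural eta /\
    forall (H : pfunctor K leT) (alpha : forall s, fsp F s -> fsp (restrict mono H) s),
      natural alpha ->
      exists beta : forall t, fsp L t -> fsp H t,
        [/\ natural beta,
            (forall s v, beta (f s) (eta s v) = alpha s v) &
            (forall beta' : forall t, fsp L t -> fsp H t, natural beta' ->
               (forall s v, beta' (f s) (eta s v) = alpha s v) ->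
               forall t v, beta' t v = beta t v)].

Definition isRan (S T : Type) (leS : S -> S -> Prop) (leT : T -> T -> Prop)
  (f : S -> T) (mono : forall s s', leS s s' -> leT (f s) (f s'))
  (F : pfunctor K leS) (L : pfunctor K leT) : Prop :=
  exists eps : forall s, fsp (restrict mono L) s -> fsp F s,
    natural eps /\
    forall (H : pfunctor K leT) (alpha : forall s, fsp (restrict mono H) s -> fsp F s),
      natural alpha ->
      exists beta : forall t, fsp H t -> fsp L t,
        [/\ natural beta,
            (forall s v, eps s (beta (f s) v) = alpha s v) &
            (forall beta' : forall t, fsp H t -> fsp L t, natural beta' ->
               (forall s v, eps s (beta' (f s) v) = alpha s v) ->
               forall t v, beta' t v = beta t v)].

End Functors.

Section Modules.
Variables (K : fieldType) (R : realType) (n : nat).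

Definition pt := 'I_n -> R.

Definition lep (a b : pt) : bool := [forall i, a i <= b i].
Definition lepP (a b : pt) : Prop := lep a b.


Definition subpt (A : pt -> Prop) := {a : pt | A a}.
Definition suble (A : pt -> Prop) (x y : subpt A) : Prop := lepP (sval x) (sval y).
Definition iota_mono (A : pt -> Prop) :
  forall x y : subpt A, suble x y -> lepP (sval x) (sval y) := fun _ _ h => h.

Definition restr (A : pt -> Prop) (M : pfunctor K lepP) : pfunctor K (@suble A) :=
  restrict (@iota_mono A) M.
Definition Lan_along (A : pt -> Prop) (F : pfunctor K (@suble A)) (L : pfunctor K lepP) :=
  isLan (@iota_mono A) F L.
Definition Ran_along (A : pt -> Prop) (F : pfunctor K (@suble A)) (L : pfunctor K lepP) :=
  isRan (@iota_mono A) F L.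

(* Presentations F1 --p1--> F0 of finitely generated free graded modules:
   generators of F0 at grades gb i, of F1 at grades gr j; column j of p1 is
   sum_i coef j i * x^(gr j - gb i) e_i. *)
Record pres := Pres {
  m0 : nat; m1 : nat;
  gb : 'I_m0 -> pt; gr : 'I_m1 -> pt;
  coef : 'M[K]_(m1, m0) }.
Arguments gb : clear implicits.
Arguments gr : clear implicits.
Arguments coef : clear implicits.

Definition pres_valid (p : pres) : Prop :=
  forall j i, coef p j i != 0 -> lep (gb p i) (gr p j).

(* F0(a) is identified with the vectors of K^m0 supported on the generators
   of grade <= a; mask a is the projection onto it. *)
Definition mask (p : pres) (a : pt) (v : 'rV[K]_(m0 p)) : 'rV[K]_(m0 p) :=
  \row_i (if lep (gb p i) a then v 0 i else 0).
Arguments mask : clear implicits.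

(* M is (isomorphic to) the cokernel of the presentation p:
   there is a natural pointwise surjection F0 -> M whose kernel at each
   grade a is the image of F1(a). *)
Definition presented (M : pfunctor K lepP) (p : pres) : Prop :=
  exists pi : forall a : pt, 'rV[K]_(m0 p) -> fsp M a,
    [/\ (forall a, lin (pi a)),
        (forall a v, pi a v = pi a (mask p a v)),
        (forall a b (h : lepP a b) v, fmap M h (pi a v) = pi b (mask p a v)),
        (forall a y, exists v, pi a v = y) &
        (forall a v, mask p a v = v ->
           (pi a v = 0 <->
            exists w : 'rV[K]_(m1 p),
              (forall j, w 0 j != 0 -> lep (gr p j) a) /\ v = w *m coef p))].

(* F(M) on presentations: replace grades by their images under F *)
Definition pmerge (F : pt -> pt) (p : pres) : pres :=
  Pres (fun i => F (gb p i)) (fun j => F (gr p j)) (coef p).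

End Modules.

Notation pmodule K R n := (pfunctor K (@lepP R n)).

Section Grids.
Variables (R : realType) (n : nat) (k : 'I_n -> nat)
          (G : forall i : 'I_n, 'I_(k i) -> R).

Definition gpoint (t : forall i : 'I_n, 'I_(k i)) : pt R n := fun i => @G i (t i).

Definition supdist (a b : pt R n) : R := \big[Num.max/0]_(i < n) `|a i - b i|.

(* x < c(G), with c(G) the minimum sup-distance between distinct grid points
   (c(G) = +oo when there is at most one grid point) *)
Definition c_gt (x : R) : Prop :=
  forall t t' : forall i : 'I_n, 'I_(k i),
    gpoint t <> gpoint t' -> x < supdist (gpoint t) (gpoint t').

Definition onGrid (a : pt R n) : Prop := exists j : 'I_n, exists l : 'I_(k j), a j = @G j l.

Definition mergeP (delta : R) (a : pt R n) : pt R n := fun i =>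
  match [pick l : 'I_(k i) | (@G i l - delta <= a i) && (a i <= @G i l)] with
  | Some l => @G i l | None => a i end.

Definition mergeM (delta : R) (a : pt R n) : pt R n := fun i =>
  match [pick l : 'I_(k i) | (@G i l <= a i) && (a i <= @G i l + delta)] with
  | Some l => @G i l | None => a i end.

Definition Aplus (delta : R) (a : pt R n) : Prop := mergeP delta a = a.
Definition Aminus (delta : R) (a : pt R n) : Prop := mergeM delta a = a /\ ~ onGrid a.

End Grids.

(* On a presentation both merges only move the grades of generators and relations.
   On A_+ (resp. A_-) a grade and its merged grade lie below exactly the same points,
   so there the merged module has the same presentation as M.  Moreover every a has a
   point s <= a of A_+ such that each merged grade below a is already below s (resp. a
   point s >= a of A_- such that each merged grade below s is below a): push each
   coordinate of a just out of the band it falls in, which is possible because distinct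
   grid values in one coordinate are more than 2 delta apart.  As A_+ is closed under
   max and A_- under min, a natural map out of (resp. into) M restricted to A_+ (resp.
   A_-) extends uniquely to the merged module through these points: the merged module
   satisfies the universal property of Lan (resp. Ran). *)

From Pilot Require Import Defs.
From mathcomp Require Import all_boot all_order all_algebra.
From mathcomp Require Import reals lra.
From Stdlib Require Import ClassicalEpsilon FunctionalExtensionality.
Import Order.TTheory GRing.Theory Num.Theory.
Local Open Scope ring_scope.

Section LinearFactor.
Context {K : fieldType}.

Lemma linB {U V : lmodType K} {f : U -> V} : lin f -> forall u v, f (u - v) = f u - f v.
Proof.
move=> f_lin u v; have := f_lin (-1) v u; rewrite !scaleN1r => e.
by rewrite [u - v]addrC e [RHS]addrC.
Qed.

Lemma lin_comp {U V W : lmodType K} {f : U -> V} {h : V -> W} :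
  lin f -> lin h -> lin (fun x => h (f x)).
Proof. by move=> f_lin h_lin c u v; rewrite f_lin h_lin. Qed.

Context {W U V : lmodType K}.
Variables (pr : W -> U) (pr' : W -> V).
Hypothesis pr_surj : forall u, exists w, pr w = u.

Lemma pr_surj_eq u : exists w, pr w == u.
Proof. by have [w <-] := pr_surj u; exists w. Qed.

Definition pick_preimage u : W := xchoose (pr_surj_eq u).

Lemma pick_preimageK u : pr (pick_preimage u) = u.
Proof. exact/eqP/(xchooseP (pr_surj_eq u)). Qed.

Definition factor u : V := pr' (pick_preimage u).

Hypothesis pr_compat : forall w w', pr w = pr w' -> pr' w = pr' w'.

Lemma factorE w : factor (pr w) = pr' w.
Proof. by apply: pr_compat; rewrite pick_preimageK. Qed.

Lemma factor_lin : lin pr -> lin pr' -> lin factor.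
Proof.
move=> pr_lin pr'_lin c u u'.
have [w <-] := pr_surj u; have [w' <-] := pr_surj u'.
by rewrite -pr_lin !factorE pr'_lin.
Qed.

End LinearFactor.
Arguments factorE {K W U V pr pr' pr_surj} pr_compat w.
Arguments factor_lin {K W U V pr pr'} pr_surj pr_compat.

Section Points.
Context {R : realType} {n : nat}.
Local Notation pt := (pt R n).

Definition maxpt (s t : pt) : pt := fun i => Num.max (s i) (t i).
Definition minpt (s t : pt) : pt := fun i => Num.min (s i) (t i).

Lemma lep_trans {a b c : pt} : lep a b -> lep b c -> lep a c.
Proof.
move=> /forallP h1 /forallP h2; apply/forallP => i.
exact: le_trans (h1 i) (h2 i).
Qed.

Lemma lep_maxl {a b : pt} : lep a (maxpt a b).
Proof. by apply/forallP => i; rewrite /maxpt le_max lexx. Qed.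

Lemma lep_maxr {a b : pt} : lep b (maxpt a b).
Proof. by apply/forallP => i; rewrite /maxpt le_max lexx orbT. Qed.

Lemma lep_max {a b c : pt} : lep a c -> lep b c -> lep (maxpt a b) c.
Proof.
move=> /forallP h1 /forallP h2; apply/forallP => i.
by rewrite /maxpt ge_max h1 h2.
Qed.

Lemma lep_minl {a b : pt} : lep (minpt a b) a.
Proof. by apply/forallP => i; rewrite /minpt ge_min lexx. Qed.

Lemma lep_minr {a b : pt} : lep (minpt a b) b.
Proof. by apply/forallP => i; rewrite /minpt ge_min lexx orbT. Qed.

Lemma lep_min {a b c : pt} : lep c a -> lep c b -> lep c (minpt a b).
Proof.
move=> /forallP h1 /forallP h2; apply/forallP => i.
by rewrite /minpt le_min h1 h2.
Qed.

Lemma pt_choice {P : 'I_n -> R -> Prop} :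
  (forall i, exists x, P i x) -> exists s : pt, forall i, P i (s i).
Proof.
move=> h; exists (fun i => proj1_sig (constructive_indefinite_description _ (h i))).
by move=> i; exact: proj2_sig.
Qed.

Definition captures_below {m0 m1} (g : 'I_m0 -> pt) (r : 'I_m1 -> pt) (a s : pt) :=
  [/\ lep s a, (forall i, lep (g i) a -> lep (g i) s) &
      (forall j, lep (r j) a -> lep (r j) s)].

Definition captures_above {m0 m1} (g : 'I_m0 -> pt) (r : 'I_m1 -> pt) (a s : pt) :=
  [/\ lep a s, (forall i, lep (g i) s -> lep (g i) a) &
      (forall j, lep (r j) s -> lep (r j) a)].

End Points.

Section Functoriality.
Context {K : fieldType} {R : realType} {n : nat}.
Variable F : pmodule K R n.

Lemma fmap_compE {a b c} (h1 : lepP a b) (h2 : lepP b c) (h3 : lepP a c) v :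
  fmap F h2 (fmap F h1 v) = fmap F h3 v.
Proof. by rewrite (fmap_comp (p := F) h1 h2 h3). Qed.

Lemma fmap_path {a b b' c} (h1 : lepP a b) (h2 : lepP b c) (h1' : lepP a b')
    (h2' : lepP b' c) v :
  fmap F h2 (fmap F h1 v) = fmap F h2' (fmap F h1' v).
Proof. by rewrite !(fmap_compE _ _ (lep_trans h1 h2)). Qed.

Lemma fiso_refl : fiso F F.
Proof. by exists (fun t (v : fsp F t) => v); split=> // t; exists id. Qed.

End Functoriality.

Section RestrictedNaturality.
Context {K : fieldType} {R : realType} {n : nat} {A : pt R n -> Prop} {F G : pmodule K R n}.
Context {a : forall s : subpt A, fsp F (sval s) -> fsp G (sval s)}.
Hypothesis a_natural : natural (F := restr A F) (G := restr A G) a.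

Lemma natural_restr_lin s : lin (U := fsp F (sval s)) (V := fsp G (sval s)) (a s).
Proof. by case: a_natural => a_lin _; apply: a_lin. Qed.

Lemma natural_restr_fmap (s t : subpt A) (h : lepP (sval s) (sval t)) x :
  a t (fmap F h x) = fmap G h (a s x).
Proof. by case: a_natural => _; apply. Qed.

End RestrictedNaturality.

Section CokernelMaps.
Context {K : fieldType} {R : realType} {n : nat}.
Local Notation pt := (pt R n).

(* [presented M p] unfolds to [exists pr, cokernel_map M p pr].  After the imports a bare
   [mask] denotes [seq.mask], hence [Defs.mask]. *)
Definition cokernel_map (M : pmodule K R n) (p : pres K R n)
    (pr : forall a : pt, 'rV[K]_(m0 p) -> fsp M a) : Prop :=
  [/\ (forall a, lin (pr a)),
      (forall a v, pr a v = pr a (Defs.mask (p:=p) a v)),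
      (forall a b (h : lepP a b) v, fmap M h (pr a v) = pr b (Defs.mask (p:=p) a v)),
      (forall a y, exists v, pr a v = y) &
      (forall a v, Defs.mask (p:=p) a v = v ->
         (pr a v = 0 <->
          exists w : 'rV[K]_(m1 p),
            (forall j, w 0 j != 0 -> lep (gr (p:=p) j) a) /\ v = w *m coef p))].

Section Projections.
Context {M : pmodule K R n} {p : pres K R n}.
Context {pr : forall a : pt, 'rV[K]_(m0 p) -> fsp M a}.
Hypothesis Hpr : cokernel_map M p pr.

Lemma cokernel_map_lin a : lin (pr a). Proof. by case: Hpr. Qed.

Lemma cokernel_map_mask a v : pr a v = pr a (Defs.mask (p:=p) a v).
Proof. by case: Hpr. Qed.

Lemma cokernel_map_fmap a b (h : lepP a b) v :
  fmap M h (pr a v) = pr b (Defs.mask (p:=p) a v).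
Proof. by case: Hpr. Qed.

Lemma cokernel_map_surj a y : exists v, pr a v = y. Proof. by case: Hpr. Qed.

End Projections.

Lemma mask_idem {p : pres K R n} a v :
  Defs.mask (p:=p) a (Defs.mask (p:=p) a v) = Defs.mask (p:=p) a v.
Proof. by apply/rowP => i; rewrite /Defs.mask !mxE; case: ifP => // ->. Qed.

Lemma mask_ext {m0 m1 m1'} {g g' : 'I_m0 -> pt} {r : 'I_m1 -> pt} {r' : 'I_m1' -> pt}
    {C : 'M[K]_(m1, m0)} {C' : 'M[K]_(m1', m0)} {a b} v :
  (forall i, lep (g i) a = lep (g' i) b) ->
  Defs.mask (p:=Pres g r C) a v = Defs.mask (p:=Pres g' r' C') b v.
Proof. by move=> e; apply/rowP => i; rewrite /Defs.mask !mxE e. Qed.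

Lemma cokernel_map_eq {M N : pmodule K R n} {m0 m1} {g g' : 'I_m0 -> pt}
    {r r' : 'I_m1 -> pt} {C : 'M[K]_(m1, m0)} {piM piN a b} :
  cokernel_map M (Pres g r C) piM -> cokernel_map N (Pres g' r' C) piN ->
  (forall i, lep (g i) a = lep (g' i) b) -> (forall j, lep (r j) a = lep (r' j) b) ->
  forall v v', piM a v = piM a v' -> piN b v = piN b v'.
Proof.
case=> linM maskM _ _ kerM [linN maskN _ _ kerN] eg er v v' e.
have /(kerM a _ (mask_idem _ _)) [w [w_rel w_eq]] :
    piM a (Defs.mask (p:=Pres g r C) a (v - v')) = 0.
  by rewrite -maskM (linB (linM a)) e subrr.
have : piN b (Defs.mask (p:=Pres g' r' C) b (v - v')) = 0.
  apply/(kerN b _ (mask_idem _ _)); exists w; split.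
    by move=> j /w_rel; rewrite er.
  by rewrite -w_eq; apply: mask_ext => i; rewrite eg.
by rewrite -maskN (linB (linN b)) => /eqP; rewrite subr_eq0 => /eqP.
Qed.

End CokernelMaps.

Section LanCriterion.
Context {K : fieldType} {R : realType} {n : nat}.
Local Notation pt := (pt R n).
Context {m0 m1 : nat} {g g' : 'I_m0 -> pt} {r r' : 'I_m1 -> pt} {C : 'M[K]_(m1, m0)}.
Context {M M' : pmodule K R n} {piM : forall a, 'rV[K]_m0 -> fsp M a}
  {piM' : forall a, 'rV[K]_m0 -> fsp M' a}.
Hypotheses (HM : cokernel_map M (Pres g r C) piM)
  (HM' : cokernel_map M' (Pres g' r' C) piM').
Context {A : pt -> Prop}.
Hypothesis A_gen : forall s, A s -> forall i, lep (g' i) s = lep (g i) s.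
Hypothesis A_rel : forall s, A s -> forall j, lep (r' j) s = lep (r j) s.
Hypothesis A_max : forall s t, A s -> A t -> A (maxpt s t).
Hypothesis A_capture : forall a, exists s : subpt A, captures_below g' r' a (sval s).

Definition lower_approx a : subpt A :=
  proj1_sig (constructive_indefinite_description _ (A_capture a)).

Lemma lower_approxP a : captures_below g' r' a (sval (lower_approx a)).
Proof. exact: (proj2_sig (constructive_indefinite_description _ (A_capture a))). Qed.

Lemma lower_approx_le a : lepP (sval (lower_approx a)) a.
Proof. by case: (lower_approxP a). Qed.

Lemma lower_approx_gen a i : lep (g' i) (sval (lower_approx a)) = lep (g' i) a.
Proof.
case: (lower_approxP a) => le_a gen_a _; apply/idP/idP; last exact: gen_a.
by move=> h; exact: lep_trans h le_a.
Qed.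

Lemma lower_approx_rel a j : lep (r' j) (sval (lower_approx a)) = lep (r' j) a.
Proof.
case: (lower_approxP a) => le_a _ rel_a; apply/idP/idP; last exact: rel_a.
by move=> h; exact: lep_trans h le_a.
Qed.

Lemma unit_compat (s : subpt A) w w' :
  piM (sval s) w = piM (sval s) w' -> piM' (sval s) w = piM' (sval s) w'.
Proof.
by apply: (cokernel_map_eq HM HM') => [i|j]; rewrite ?A_gen ?A_rel //; exact: svalP.
Qed.

Definition unit_map (s : subpt A) : fsp M (sval s) -> fsp M' (sval s) :=
  factor (piM (sval s)) (piM' (sval s)) (cokernel_map_surj HM (sval s)).

Lemma unit_mapE (s : subpt A) v : unit_map s (piM (sval s) v) = piM' (sval s) v.
Proof. exact: factorE (@unit_compat s) v. Qed.

Lemma unit_map_natural : natural (F := restr A M) (G := restr A M') unit_map.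
Proof.
split=> [s|s t h y].
  exact: factor_lin _ (@unit_compat s) (cokernel_map_lin HM _) (cokernel_map_lin HM' _).
have [v <-] := cokernel_map_surj HM (sval s) y.
rewrite /= (cokernel_map_fmap HM) !unit_mapE (cokernel_map_fmap HM').
by congr (piM' _ _); apply: mask_ext => i; rewrite A_gen //; exact: svalP.
Qed.

Section Extension.
Context {H : pmodule K R n}.
Variable alpha : forall s : subpt A, fsp M (sval s) -> fsp H (sval s).
Hypothesis alpha_natural : natural (F := restr A M) (G := restr A H) alpha.

Let alpha_lin := natural_restr_lin alpha_natural.
Let alpha_fmap := natural_restr_fmap alpha_natural.

Lemma lan_compat a w w' : piM' a w = piM' a w' ->
  piM (sval (lower_approx a)) w = piM (sval (lower_approx a)) w'.
Proof.
apply: (cokernel_map_eq HM' HM) => [i|j].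
  by rewrite -A_gen ?lower_approx_gen //; exact: svalP.
by rewrite -A_rel ?lower_approx_rel //; exact: svalP.
Qed.

Definition lan_map a : fsp M' a -> fsp H a :=
  factor (piM' a)
    (fun v => fmap H (lower_approx_le a)
                (alpha (lower_approx a) (piM (sval (lower_approx a)) v)))
    (cokernel_map_surj HM' a).

Lemma lan_mapE a v : lan_map a (piM' a v) =
  fmap H (lower_approx_le a) (alpha (lower_approx a) (piM (sval (lower_approx a)) v)).
Proof. by apply: factorE => w w' /lan_compat ->. Qed.

Lemma lan_map_fmap a b (h : lepP a b) y :
  lan_map b (fmap M' h y) = fmap H h (lan_map a y).
Proof.
have [v <-] := cokernel_map_surj HM' a y.
rewrite (cokernel_map_fmap HM') !lan_mapE.
(* Both sides factor through the join of the two approximations, which lies in [A]. *)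
set sa := lower_approx a; set sb := lower_approx b.
have A_u : A (maxpt (sval sa) (sval sb)) by apply: A_max; exact: svalP.
pose u : subpt A := exist _ _ A_u.
have sa_u : lepP (sval sa) (sval u) := lep_maxl.
have sb_u : lepP (sval sb) (sval u) := lep_maxr.
have u_b : lepP (sval u) b := lep_max (lep_trans (lower_approx_le a) h) (lower_approx_le b).
rewrite (fmap_compE H _ h (lep_trans sa_u u_b)) -(fmap_compE H sa_u u_b).
rewrite -(fmap_compE H sb_u u_b) -!alpha_fmap !(cokernel_map_fmap HM).
congr (fmap H _ (alpha _ _)).
rewrite (cokernel_map_mask HM) [RHS](cokernel_map_mask HM); congr (piM _ _).
apply/rowP => i; rewrite /Defs.mask !mxE /=.
rewrite -(A_gen _ (svalP sa)) -(A_gen _ (svalP sb)) !lower_approx_gen.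
case E: (lep (g' i) a); last by rewrite !if_same.
by rewrite (lep_trans E h).
Qed.

Lemma lan_map_natural : natural (F := M') (G := H) lan_map.
Proof.
split=> [a|a b h y]; last exact: lan_map_fmap.
apply: factor_lin _ _ (cokernel_map_lin HM' a) _; first by move=> w w' /lan_compat ->.
exact: lin_comp (lin_comp (cokernel_map_lin HM _) (alpha_lin _)) (fmap_lin _).
Qed.

Lemma lan_map_unit (s : subpt A) y : lan_map (sval s) (unit_map s y) = alpha s y.
Proof.
have [v <-] := cokernel_map_surj HM (sval s) y.
rewrite unit_mapE lan_mapE -alpha_fmap (cokernel_map_fmap HM).
congr (alpha _ _); rewrite [RHS](cokernel_map_mask HM) (cokernel_map_mask HM).
congr (piM _ _); apply/rowP => i; rewrite /Defs.mask !mxE /=.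
rewrite -(A_gen _ (svalP (lower_approx _))) lower_approx_gen (A_gen _ (svalP s)).
by case: (lep (g i) (sval s)).
Qed.

Lemma lan_map_unique (beta : forall a, fsp M' a -> fsp H a) :
  natural (F := M') (G := H) beta ->
  (forall s v, beta (sval s) (unit_map s v) = alpha s v) ->
  forall a y, beta a y = lan_map a y.
Proof.
move=> [_ beta_fmap] beta_unit a y.
have [v <-] := cokernel_map_surj HM' a y.
rewrite lan_mapE -beta_unit unit_mapE -beta_fmap (cokernel_map_fmap HM').
congr (beta a _); rewrite (cokernel_map_mask HM') [RHS](cokernel_map_mask HM').
congr (piM' a _); apply/rowP => i; rewrite /Defs.mask !mxE /= lower_approx_gen.
by case: (lep (g' i) a).
Qed.

End Extension.

Lemma cokernel_isLan : isLan (@iota_mono R n A) (restr A M) M'.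
Proof.
exists unit_map; split; first exact: unit_map_natural.
move=> H alpha alpha_nat; exists (lan_map alpha); split.
- exact: lan_map_natural.
- exact: lan_map_unit.
- exact: lan_map_unique.
Qed.

End LanCriterion.

Section RanCriterion.
Context {K : fieldType} {R : realType} {n : nat}.
Local Notation pt := (pt R n).
Context {m0 m1 : nat} {g g' : 'I_m0 -> pt} {r r' : 'I_m1 -> pt} {C : 'M[K]_(m1, m0)}.
Context {M M' : pmodule K R n} {piM : forall a, 'rV[K]_m0 -> fsp M a}
  {piM' : forall a, 'rV[K]_m0 -> fsp M' a}.
Hypotheses (HM : cokernel_map M (Pres g r C) piM)
  (HM' : cokernel_map M' (Pres g' r' C) piM').
Context {A : pt -> Prop}.
Hypothesis A_gen : forall s, A s -> forall i, lep (g' i) s = lep (g i) s.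
Hypothesis A_rel : forall s, A s -> forall j, lep (r' j) s = lep (r j) s.
Hypothesis A_min : forall s t, A s -> A t -> A (minpt s t).
Hypothesis A_capture : forall a, exists s : subpt A, captures_above g' r' a (sval s).

Definition upper_approx a : subpt A :=
  proj1_sig (constructive_indefinite_description _ (A_capture a)).

Lemma upper_approxP a : captures_above g' r' a (sval (upper_approx a)).
Proof. exact: (proj2_sig (constructive_indefinite_description _ (A_capture a))). Qed.

Lemma upper_approx_ge a : lepP a (sval (upper_approx a)).
Proof. by case: (upper_approxP a). Qed.

Lemma upper_approx_gen a i : lep (g' i) (sval (upper_approx a)) = lep (g' i) a.
Proof.
case: (upper_approxP a) => ge_a gen_a _; apply/idP/idP; first exact: gen_a.
by move=> h; exact: lep_trans h ge_a.
Qed.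

Lemma upper_approx_rel a j : lep (r' j) (sval (upper_approx a)) = lep (r' j) a.
Proof.
case: (upper_approxP a) => ge_a _ rel_a; apply/idP/idP; first exact: rel_a.
by move=> h; exact: lep_trans h ge_a.
Qed.

Lemma counit_compat (s : subpt A) w w' :
  piM' (sval s) w = piM' (sval s) w' -> piM (sval s) w = piM (sval s) w'.
Proof.
by apply: (cokernel_map_eq HM' HM) => [i|j]; rewrite ?A_gen ?A_rel //; exact: svalP.
Qed.

Definition counit_map (s : subpt A) : fsp M' (sval s) -> fsp M (sval s) :=
  factor (piM' (sval s)) (piM (sval s)) (cokernel_map_surj HM' (sval s)).

Lemma counit_mapE (s : subpt A) v : counit_map s (piM' (sval s) v) = piM (sval s) v.
Proof. exact: factorE (@counit_compat s) v. Qed.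

Lemma counit_map_natural : natural (F := restr A M') (G := restr A M) counit_map.
Proof.
split=> [s|s t h y].
  exact: factor_lin _ (@counit_compat s) (cokernel_map_lin HM' _) (cokernel_map_lin HM _).
have [v <-] := cokernel_map_surj HM' (sval s) y.
rewrite /= (cokernel_map_fmap HM') !counit_mapE (cokernel_map_fmap HM).
by congr (piM _ _); apply: mask_ext => i; rewrite A_gen //; exact: svalP.
Qed.

Section Coextension.
Context {H : pmodule K R n}.
Variable alpha : forall s : subpt A, fsp H (sval s) -> fsp M (sval s).
Hypothesis alpha_natural : natural (F := restr A H) (G := restr A M) alpha.

Let alpha_lin := natural_restr_lin alpha_natural.
Let alpha_fmap := natural_restr_fmap alpha_natural.

Lemma ran_compat a w w' :
  piM (sval (upper_approx a)) w = piM (sval (upper_approx a)) w' -> piM' a w = piM' a w'.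
Proof.
apply: (cokernel_map_eq HM HM') => [i|j].
  by rewrite -A_gen ?upper_approx_gen //; exact: svalP.
by rewrite -A_rel ?upper_approx_rel //; exact: svalP.
Qed.

Definition ran_map a (y : fsp H a) : fsp M' a :=
  factor (piM (sval (upper_approx a))) (piM' a) (cokernel_map_surj HM _)
    (alpha (upper_approx a) (fmap H (upper_approx_ge a) y)).

Lemma ran_mapE a y w :
  piM (sval (upper_approx a)) w = alpha (upper_approx a) (fmap H (upper_approx_ge a) y) ->
  ran_map a y = piM' a w.
Proof. by rewrite /ran_map => <-; exact: factorE (@ran_compat a) w. Qed.

Lemma ran_map_fmap a b (h : lepP a b) y :
  ran_map b (fmap H h y) = fmap M' h (ran_map a y).
Proof.
(* Both sides factor through the meet of the two approximations, which lies in [A]. *)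
set sa := upper_approx a; set sb := upper_approx b.
have A_u : A (minpt (sval sa) (sval sb)) by apply: A_min; exact: svalP.
pose u : subpt A := exist _ _ A_u.
have u_sa : lepP (sval u) (sval sa) := lep_minl.
have u_sb : lepP (sval u) (sval sb) := lep_minr.
have a_u : lepP a (sval u) := lep_min (upper_approx_ge a) (lep_trans h (upper_approx_ge b)).
have [w ew] := cokernel_map_surj HM (sval u) (alpha u (fmap H a_u y)).
have -> : ran_map b (fmap H h y) = piM' b (Defs.mask (p := Pres g r C) (sval u) w).
  apply: ran_mapE; rewrite -(cokernel_map_fmap HM _ _ u_sb) ew -alpha_fmap.
  by congr (alpha _ _); exact: fmap_path.
have -> : ran_map a y = piM' a (Defs.mask (p := Pres g r C) (sval u) w).
  apply: ran_mapE; rewrite -(cokernel_map_fmap HM _ _ u_sa) ew -alpha_fmap.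
  by congr (alpha _ _); exact: fmap_compE.
rewrite (cokernel_map_fmap HM'); congr (piM' _ _).
apply/rowP => i; rewrite /Defs.mask !mxE /=.
case E: (lep (g i) (sval u)); last by rewrite if_same.
suff -> : lep (g' i) a by [].
rewrite -(upper_approx_gen a); apply: lep_trans u_sa.
by rewrite (A_gen _ A_u).
Qed.

Lemma ran_map_natural : natural (F := H) (G := M') ran_map.
Proof.
split=> [a|a b h y]; last exact: ran_map_fmap.
apply: lin_comp (lin_comp (fmap_lin _) (alpha_lin _)) _.
exact: factor_lin _ (@ran_compat a) (cokernel_map_lin HM _) (cokernel_map_lin HM' _).
Qed.

Lemma ran_map_counit (s : subpt A) y : counit_map s (ran_map (sval s) y) = alpha s y.
Proof.
have [w ew] := cokernel_map_surj HM _
  (alpha (upper_approx (sval s)) (fmap H (upper_approx_ge (sval s)) y)).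
rewrite (ran_mapE _ _ _ ew) counit_mapE.
have [x ex] := cokernel_map_surj HM (sval s) (alpha s y).
rewrite -ex [RHS](cokernel_map_mask HM).
apply: (cokernel_map_eq (a := sval (upper_approx (sval s))) HM HM) => [i|j|].
- by rewrite -(A_gen _ (svalP (upper_approx _))) upper_approx_gen (A_gen _ (svalP s)).
- by rewrite -(A_rel _ (svalP (upper_approx _))) upper_approx_rel (A_rel _ (svalP s)).
by rewrite ew alpha_fmap -ex (cokernel_map_fmap HM).
Qed.

Lemma ran_map_unique (beta : forall a, fsp H a -> fsp M' a) :
  natural (F := H) (G := M') beta ->
  (forall s v, counit_map s (beta (sval s) v) = alpha s v) ->
  forall a y, beta a y = ran_map a y.
Proof.
move=> [_ beta_fmap] beta_counit a y.
have [z ez] := cokernel_map_surj HM' a (beta a y).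
rewrite -ez (cokernel_map_mask HM'); symmetry; apply: ran_mapE.
by rewrite -beta_counit beta_fmap -ez (cokernel_map_fmap HM') counit_mapE.
Qed.

End Coextension.

Lemma cokernel_isRan : isRan (@iota_mono R n A) (restr A M) M'.
Proof.
exists counit_map; split; first exact: counit_map_natural.
move=> H alpha alpha_nat; exists (ran_map alpha); split.
- exact: ran_map_natural.
- exact: ran_map_counit.
- exact: ran_map_unique.
Qed.

End RanCriterion.

Section Gaps.
Context {R : realFieldType}.

Lemma gap_below (cs : seq R) hi :
  exists2 e, 0 < e & forall z, z \in cs -> z < hi -> z < hi - e.
Proof.
elim: cs => [|z cs [e e0 he]]; first by exists 1.
case: (ltP z hi) => hz; last first.
  by exists e => // z'; rewrite inE => /orP [/eqP -> h|]; [lra | exact: he].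
have h0 : 0 < (hi - z) / 2 by rewrite divr_gt0 // subr_gt0.
exists (Num.min e ((hi - z) / 2)); first by rewrite lt_min e0 h0.
have m1 : Num.min e ((hi - z) / 2) <= e by rewrite ge_min lexx.
have m2 : Num.min e ((hi - z) / 2) <= (hi - z) / 2 by rewrite ge_min lexx orbT.
move=> z'; rewrite inE => /orP [/eqP -> _| hz' hlt]; first by lra.
by have := he _ hz' hlt; lra.
Qed.

Lemma gap_above (cs : seq R) lo :
  exists2 e, 0 < e & forall z, z \in cs -> lo < z -> lo + e < z.
Proof.
have [e e0 he] := gap_below [seq - x | x <- cs] (- lo).
exists e => // z hz hlt.
by have := he (- z) (map_f _ hz); rewrite ltrN2 => /(_ hlt); lra.
Qed.

End Gaps.

Section Grid.
Context {R : realType} {n : nat} {k : 'I_n -> nat}.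
Variables (G : forall i : 'I_n, 'I_(k i) -> R) (delta : R).
Hypothesis k_gt0 : forall i, (0 < k i)%N.
Hypothesis G_sep : c_gt G (2 * delta).
Local Notation pt := (pt R n).

Lemma grid_gap {i} {l l' : 'I_(k i)} : G i l' < G i l -> 2 * delta < G i l - G i l'.
Proof.
move=> lt_l'l.
(* Use c(G) > 2 delta on two grid points differing only in coordinate [i]. *)
pose t0 j : 'I_(k j) := Ordinal (k_gt0 j).
pose t (l0 : 'I_(k i)) j : 'I_(k j) := if j == i then insubd (t0 j) (val l0) else t0 j.
have t_i l0 : t l0 i = l0 by apply: val_inj; rewrite /t eqxx val_insubd ltn_ord.
have t_j l0 j : j != i -> t l0 j = t0 j by move=> /negbTE h; rewrite /t h.
have : 2 * delta < supdist (gpoint G (t l)) (gpoint G (t l')).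
  apply: G_sep => /(congr1 (fun f => f i)); rewrite /gpoint !t_i => e.
  by move: lt_l'l; rewrite e ltxx.
suff : supdist (gpoint G (t l)) (gpoint G (t l')) <= G i l - G i l' by lra.
rewrite /supdist; apply: (big_ind (fun x => x <= G i l - G i l')).
- by rewrite subr_ge0 ltW.
- by move=> x y hx hy; rewrite ge_max hx hy.
- move=> j _; rewrite /gpoint; case: (eqVneq j i) => [->|ne].
    by rewrite !t_i gtr0_norm // subr_gt0.
  by rewrite !t_j // subrr normr0 subr_ge0 ltW.
Qed.

Definition grid_values i : seq R := [seq G i l | l <- enum 'I_(k i)].

Lemma grid_valuesP i (l : 'I_(k i)) : G i l \in grid_values i.
Proof. by rewrite map_f ?mem_enum. Qed.

Definition plus_stable i (x : R) :=
  forall l : 'I_(k i), ~ ((G i l - delta <= x) && (x < G i l)).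

Lemma mergeP_ge a i : a i <= mergeP G delta a i.
Proof. by rewrite /mergeP; case: pickP => [l /andP[_ h]|_]. Qed.

Lemma mergeP_stable a i : plus_stable i (mergeP G delta a i).
Proof.
move=> l /andP []; rewrite /mergeP; case: pickP => [l0 _|none] h1 h2.
  by have := grid_gap h2; lra.
by have := none l; rewrite h1 /= (ltW h2).
Qed.

Lemma AplusP s : Aplus G delta s <-> forall i, plus_stable i (s i).
Proof.
split=> [e i|h]; first by rewrite -e; exact: mergeP_stable.
apply: functional_extensionality => i; rewrite /mergeP.
case: pickP => [l /andP[h1 h2]|] //.
apply/eqP; rewrite eq_le h2 andbT leNgt; apply/negP => h3.
by apply: (h i l); rewrite h1 h3.
Qed.

Lemma Aplus_lep s x : Aplus G delta s -> lep (mergeP G delta x) s = lep x s.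
Proof.
move=> /AplusP s_stable; apply: eq_forallb => i.
apply/idP/idP; first exact: le_trans (mergeP_ge x i).
rewrite /mergeP; case: pickP => [l /andP[h1 h2] | _] // h.
rewrite leNgt; apply/negP => h3; apply: (s_stable i l).
by rewrite (le_trans h1 h) h3.
Qed.

Lemma Aplus_max s t : Aplus G delta s -> Aplus G delta t -> Aplus G delta (maxpt s t).
Proof.
move=> /AplusP s_stable /AplusP t_stable; apply/AplusP => i; rewrite /maxpt.
by case: leP.
Qed.

Lemma plus_stable_below {i} {cs : seq R} x : (forall c, c \in cs -> plus_stable i c) ->
  exists y, [/\ y <= x, plus_stable i y & forall c, c \in cs -> c <= x -> c <= y].
Proof.
move=> cs_stable.
case: (boolP [exists l, (G i l - delta <= x) && (x < G i l)]); last first.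
  move=> /existsPn x_stable; exists x; split => // l; exact/negP.
case/existsP => l0 /andP [h1 h2].
have [e e0 he] := gap_below (cs ++ grid_values i) (G i l0 - delta).
exists (G i l0 - delta - e); split.
- lra.
- move=> l /andP [h3 h4].
  have Gl_mem : G i l \in cs ++ grid_values i by rewrite mem_cat grid_valuesP orbT.
  case: (ltP (G i l) (G i l0 - delta)) => h5; first by have := he _ Gl_mem h5; lra.
  have lt_ll0 : G i l < G i l0 by lra.
  by have := grid_gap lt_ll0; lra.
- move=> c c_mem c_le_x.
  have c_mem' : c \in cs ++ grid_values i by rewrite mem_cat c_mem.
  case: (ltP c (G i l0 - delta)) => h5; first by have := he _ c_mem' h5; lra.
  exfalso; apply: (cs_stable c c_mem l0); rewrite h5 /=; exact: le_lt_trans c_le_x h2.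
Qed.

Lemma Aplus_capture m0 m1 (g : 'I_m0 -> pt) (r : 'I_m1 -> pt) a :
  exists s : subpt (Aplus G delta),
    captures_below (fun i => mergeP G delta (g i)) (fun j => mergeP G delta (r j)) a
      (sval s).
Proof.
pose cs i := [seq mergeP G delta (g j) i | j <- enum 'I_m0] ++
             [seq mergeP G delta (r j) i | j <- enum 'I_m1].
have cs_stable i c : c \in cs i -> plus_stable i c.
  by rewrite mem_cat => /orP [] /mapP [j _ ->]; exact: mergeP_stable.
have [s sP] := pt_choice (fun i => plus_stable_below (a i) (@cs_stable i)).
have As : Aplus G delta s by apply/AplusP => i; case: (sP i).
exists (exist _ s As); split => /=.
- by apply/forallP => i; case: (sP i).
- move=> j /forallP h; apply/forallP => i; case: (sP i) => _ _; apply; last exact: h i.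
  by rewrite /cs mem_cat (map_f (fun j => mergeP G delta (g j) i)) ?mem_enum.
- move=> j /forallP h; apply/forallP => i; case: (sP i) => _ _; apply; last exact: h i.
  by rewrite /cs mem_cat (map_f (fun j => mergeP G delta (r j) i)) ?mem_enum ?orbT.
Qed.

(* The second conjunct only matters when [delta < 0]. *)
Definition minus_stable i (x : R) :=
  forall l : 'I_(k i), ~ ((G i l <= x) && (x <= G i l + delta)) /\ x <> G i l.

Definition minus_value i (c : R) :=
  (exists l, c = G i l) \/ (forall l : 'I_(k i), ~ ((G i l <= c) && (c <= G i l + delta))).

Lemma mergeM_le a i : mergeM G delta a i <= a i.
Proof. by rewrite /mergeM; case: pickP => [l /andP[h _]|_]. Qed.

Lemma mergeM_value a i : minus_value i (mergeM G delta a i).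
Proof.
rewrite /mergeM; case: pickP => [l _|none]; first by left; exists l.
by right => l; have := none l => /negP.
Qed.

Lemma AminusP s : Aminus G delta s <-> forall i, minus_stable i (s i).
Proof.
split=> [[e off_grid] i l|h]; first split.
- move=> h; apply: off_grid; exists i.
  move: e => /(congr1 (fun f => f i)); rewrite /mergeM.
  case: pickP => [l' _ <-| none _]; first by exists l'.
  by have := none l; rewrite h.
- by move=> h; apply: off_grid; exists i, l.
split; last by case=> i [l e]; exact: (h i l).2 e.
apply: functional_extensionality => i; rewrite /mergeM.
by case: pickP => [l hl|] //; case: (h i l).
Qed.

Lemma Aminus_lep s x : Aminus G delta s -> lep (mergeM G delta x) s = lep x s.
Proof.
move=> /AminusP s_stable; apply: eq_forallb => i.
apply/idP/idP; last exact: le_trans (mergeM_le x i).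
rewrite /mergeM; case: pickP => [l /andP[h1 h2] | _] // h.
rewrite leNgt; apply/negP => h3; apply: (s_stable i l).1.
by rewrite h /= (le_trans (ltW h3) h2).
Qed.

Lemma Aminus_min s t : Aminus G delta s -> Aminus G delta t -> Aminus G delta (minpt s t).
Proof.
move=> /AminusP s_stable /AminusP t_stable; apply/AminusP => i; rewrite /minpt.
by case: leP.
Qed.

Lemma minus_stable_above {i} {cs : seq R} x : (forall c, c \in cs -> minus_value i c) ->
  exists y, [/\ x <= y, minus_stable i y & forall c, c \in cs -> c <= y -> c <= x].
Proof.
move=> cs_value.
case: (boolP [exists l, (G i l <= x) && (x <= G i l + delta)]); last first.
  move=> /existsPn x_free.
  have [e e0 he] := gap_above (cs ++ grid_values i) x.
  exists (x + e); split => [|l|c c_mem c_le].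
  - lra.
  - have Gl_mem : G i l \in cs ++ grid_values i by rewrite mem_cat grid_valuesP orbT.
    split=> [/andP [h3 h4]|h3]; case: (ltP x (G i l)) => h5.
    + by have := he _ Gl_mem h5; lra.
    + by move: (x_free l); rewrite h5 /= -ltNge => h6; lra.
    + by have := he _ Gl_mem h5; lra.
    + lra.
  - rewrite leNgt; apply/negP => h5.
    have c_mem' : c \in cs ++ grid_values i by rewrite mem_cat c_mem.
    by have := he c c_mem' h5; lra.
case/existsP => l0 /andP [h1 h2].
have [e e0 he] := gap_above (cs ++ grid_values i) (G i l0 + delta).
have y_free l : ~ ((G i l <= G i l0 + delta + e) && (G i l0 + delta + e <= G i l + delta)).
  move=> /andP [h3 h4].
  have Gl_mem : G i l \in cs ++ grid_values i by rewrite mem_cat grid_valuesP orbT.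
  case: (ltP (G i l0 + delta) (G i l)) => h5; first by have := he _ Gl_mem h5; lra.
  have lt_l0l : G i l0 < G i l by lra.
  by have := grid_gap lt_l0l; lra.
exists (G i l0 + delta + e); split => [|l|c c_mem c_le_y].
- lra.
- split; first exact: y_free.
  move=> h3; apply: (y_free l); rewrite -h3 lexx /=; lra.
- have c_mem' : c \in cs ++ grid_values i by rewrite mem_cat c_mem.
  case: (ltP (G i l0 + delta) c) => h5; first by have := he c c_mem' h5; lra.
  rewrite leNgt; apply/negP => h6.
  case: (cs_value c c_mem) => [[l' el'] | c_free].
    rewrite el' in h5 h6.
    have lt_l0l' : G i l0 < G i l' by exact: le_lt_trans h1 h6.
    by have := grid_gap lt_l0l'; lra.
  by apply: (c_free l0); rewrite (le_trans h1 (ltW h6)) h5.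
Qed.

Lemma Aminus_capture m0 m1 (g : 'I_m0 -> pt) (r : 'I_m1 -> pt) a :
  exists s : subpt (Aminus G delta),
    captures_above (fun i => mergeM G delta (g i)) (fun j => mergeM G delta (r j)) a
      (sval s).
Proof.
pose cs i := [seq mergeM G delta (g j) i | j <- enum 'I_m0] ++
             [seq mergeM G delta (r j) i | j <- enum 'I_m1].
have cs_value i c : c \in cs i -> minus_value i c.
  by rewrite mem_cat => /orP [] /mapP [j _ ->]; exact: mergeM_value.
have [s sP] := pt_choice (fun i => minus_stable_above (a i) (@cs_value i)).
have As : Aminus G delta s by apply/AminusP => i; case: (sP i).
exists (exist _ s As); split => /=.
- by apply/forallP => i; case: (sP i).
- move=> j /forallP h; apply/forallP => i; case: (sP i) => _ _; apply; last exact: h i.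
  by rewrite /cs mem_cat (map_f (fun j => mergeM G delta (g j) i)) ?mem_enum.
- move=> j /forallP h; apply/forallP => i; case: (sP i) => _ _; apply; last exact: h i.
  by rewrite /cs mem_cat (map_f (fun j => mergeM G delta (r j) i)) ?mem_enum ?orbT.
Qed.

End Grid.

Theorem mainTheorem8 (K : fieldType) (R : realType) (n : nat) (k : 'I_n -> nat)
  (G : forall i : 'I_n, 'I_(k i) -> R) (delta : R) :
  (forall i, (0 < k i)%N) ->
  c_gt G (2 * delta) ->
  forall p : pres K R n, pres_valid p ->
  forall M : pmodule K R n, presented M p ->
  (forall MP : pmodule K R n, presented MP (pmerge (mergeP G delta) p) ->
     exists L : pmodule K R n,
       Lan_along (restr (Aplus G delta) M) L /\ fiso MP L) /\
  (forall MM : pmodule K R n, presented MM (pmerge (mergeM G delta) p) ->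
     exists L : pmodule K R n,
       Ran_along (restr (Aminus G delta) M) L /\ fiso MM L).
Proof.
move=> k_gt0 G_sep [m0 m1 g r C] _ M [piM HM].
split=> [MP [piP HP] | MM [piMM HMM]].
- exists MP; split; last exact: fiso_refl.
  apply: (cokernel_isLan HM HP) => [s As i|s As j|s t|a].
  + exact: Aplus_lep.
  + exact: Aplus_lep.
  + exact: Aplus_max.
  + exact: Aplus_capture.
- exists MM; split; last exact: fiso_refl.
  apply: (cokernel_isRan HM HMM) => [s As i|s As j|s t|a].
  + exact: Aminus_lep.
  + exact: Aminus_lep.
  + exact: Aminus_min.
  + exact: Aminus_capture.
Qed.
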